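(* For every finite simple digraph $G$, ${\sf dtw}(G) \leq {\sf circ}(G) + 1$, where ${\sf dtw}(G)$ is the directed treewidth of $G$ and ${\sf circ}(G)$ is its circumference.
   Context: All digraphs are finite and simple (no loops, no multiple arcs). The circumference ${\sf circ}(G)$ of a digraph $G$ is the length (number of arcs) of a longest simple directed cycle in $G$; if $G$ is acyclic (a DAG), ${\sf circ}(G)$ is defined to be $1$. An arborescence is a DAG $T$ with a unique root $r$ (node with no incoming arcs) such that for every node $i$ there is a unique directed walk from $r$ to $i$. For distinct nodes $i,j$ of $T$ write $i \prec j$ if there is a directed walk in $T$ from $i$ to $j$, and $i \preceq j$ if $i=j$ or $i\prec j$. For an arc $e=(i,j)$ of $T$ and a node $k$, write $e \prec k$ if $j=k$ or $j \prec k$; write $e \sim i$ if $e$ is incident with $i$. Given sets $W_i$ for nodes $i$, let $W_{\succ e}=\bigcup_{k: e\prec k} W_k$; given sets $A_e$ for arcs $e$, let $A_{\sim i}=\bigcup_{e\sim i}A_e$. For $W,X\subseteq V(G)$, $W$ is $X$-normal if $W\cap X=\emptyset$ and there is no directed path in $G\setminus X$ (the subdigraph induced by $V(G)\setminus X$) whose first and last vertices are in $W$ and which uses a vertex outside $W\cup X$. An arboreal decomposition of $G$ is a triple $(T,(W_i)_{i\in V(T)},(A_e)_{e\in E(T)})$ where $T$ is an arborescence, the $W_i$ and $A_e$ are subsets of $V(G)$, $(W_i)_{i\in V(T)}$ is a partition of $V(G)$, and for each arc $e$ of $T$, $W_{\succ e}$ is $A_e$-normal. Its width is $\max_{i\in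 V(T)}|W_i\cup A_{\sim i}|-1$, and the directed treewidth ${\sf dtw}(G)$ is the minimum width of an arboreal decomposition of $G$. *)

From Stdlib Require Import ClassicalEpsilon.
From mathcomp Require Import all_boot.
Set Implicit Arguments. Unset Strict Implicit. Unset Printing Implicit Defensive.

(* A finite simple digraph on vertex type V is a relation g : rel V
   (g x y = arc from x to y), loopless (irreflexive g); multiple arcs
   cannot occur in this representation. *)

Definition pb (P : Prop) : bool :=
  if excluded_middle_informative P then true else false.

(* A directed cycle of length n: n pairwise distinct vertices v_0..v_{n-1}
   with arcs v_i -> v_{i+1} and v_{n-1} -> v_0 ([cycle] from path.v).
   In a loopless digraph, n >= 2 automatically. *)
Definition has_cycle_of_length (V : finType) (g : rel V) (n : nat) : bool :=
  [exists t : n.-tuple V, uniq t && cycle g t].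

Definition circ (V : finType) (g : rel V) : nat :=
  maxn 1 (\max_(n < #|V|.+1 | has_cycle_of_length g n) n).

Definition dag (I : finType) (t : rel I) : Prop :=
  forall c : seq I, c != [::] -> ~~ cycle t c.

Definition arborescence (I : finType) (t : rel I) (r : I) : Prop :=
  [/\ dag t,
      (forall i : I, (forall j : I, ~~ t j i) <-> i = r)
    & (forall i : I, exists! p : seq I, path t r p /\ last r p = i)].

Definition normal (V : finType) (g : rel V) (X W : {set V}) : Prop :=
  [disjoint W & X] /\
  ~ (exists (x : V) (q : seq V),
        [/\ path g x q && uniq (x :: q), all (fun v => v \notin X) (x :: q),
            x \in W, last x q \in W
          & has (fun v => v \notin W) (x :: q)]).

(* W_{succ e} for an arc e = (i, j): union of W_k over all k with e ≺ k,
   i.e. k = j or j ≺ k, i.e. k reachable from j in t. *)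
Definition W_succ (I V : finType) (t : rel I) (W : I -> {set V}) (j : I)
  : {set V} := \bigcup_(k | connect t j k) W k.

Definition A_sim (I V : finType) (t : rel I) (A : I -> I -> {set V}) (i : I)
  : {set V} :=
  (\bigcup_(j | t i j) A i j) :|: (\bigcup_(j | t j i) A j i).

Definition partition_family (I V : finType) (W : I -> {set V}) : Prop :=
  (forall x : V, exists i : I, x \in W i) /\
  (forall i j : I, i != j -> [disjoint W i & W j]).

(* (T, W, A) is an arboreal decomposition of g, where T = (I, t) with root r
   and A i j is the set A_e attached to the arc e = (i, j) (only meaningful
   when t i j). *)
Definition arboreal_decomposition (V : finType) (g : rel V)
  (I : finType) (t : rel I) (r : I) (W : I -> {set V}) (A : I -> I -> {set V})
  : Prop :=
  [/\ arborescence t r,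
      partition_family W
    & forall i j : I, t i j -> normal g (A i j) (W_succ t W j)].

(* width = max_i |W_i ∪ A_{~i}| - 1 (truncated subtraction: only matters for
   the empty digraph). *)
Definition width (I V : finType) (t : rel I) (W : I -> {set V})
  (A : I -> I -> {set V}) : nat :=
  (\max_(i : I) #|W i :|: A_sim t A i|).-1.

Definition has_decomp_of_width (V : finType) (g : rel V) (k : nat) : Prop :=
  exists (I : finType) (t : rel I) (r : I) (W : I -> {set V})
         (A : I -> I -> {set V}),
    arboreal_decomposition g t r W A /\ width t W A = k.

(* The trivial one-node decomposition exists, so the minimum is well defined. *)
Lemma has_decomp_exists (V : finType) (g : rel V) :
  exists k, pb (has_decomp_of_width g k).
Proof.
exists (width (fun _ _ : unit => false) (fun _ : unit => [set: V])
               (fun _ _ : unit => (set0 : {set V}))).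
rewrite /pb; case: excluded_middle_informative => // H; exfalso; apply: H.
exists (unit : finType), (fun _ _ => false), tt, (fun _ => [set: V]),
  (fun _ _ => set0); split; last by [].
rewrite /arboreal_decomposition /arborescence /partition_family.
split; [split | split | by []].
- by rewrite /dag; case=> [|x c] // _; case: c.
- by move=> [] ; split.
- move=> [] ; exists [::]; split=> // p [Hp _].
  by case: p Hp.
- by move=> x; exists tt; rewrite inE.
- by move=> [] [].
Qed.

Definition dtw (V : finType) (g : rel V) : nat :=
  ex_minn (has_decomp_exists g).

(* Take a depth-first search forest of G and hang it below an extra root: this
   is the arborescence. Every vertex v is a bag on its own, and the arc entering
   v is guarded by the circ(G) nearest proper ancestors of v. In a DFS forest an
   arc either goes down into the subtree of its tail or to a vertex visited
   earlier; hence a directed path leaving the subtree of v and coming back must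
   meet an ancestor a of v before returning. If a is not among the guards, the
   tree path from a down through v, followed by the path back to a, is a cycle
   longer than circ(G). Each bag together with its guards has at most
   circ(G) + 1 vertices. *)

From Stdlib Require Import ClassicalEpsilon.
From mathcomp Require Import all_boot zify.
Set Implicit Arguments. Unset Strict Implicit. Unset Printing Implicit Defensive.

Section DepthFirstForest.
Variables (V : finType) (g : rel V).

Definition below (pre sz : V -> nat) (v w : V) : Prop :=
  pre w <= pre v /\ pre v < pre w + sz w.

(* A depth-first-search forest of the vertex set [U] whose roots lie in [P]:
   [pre] is the preorder numbering, [sz v] the size of the subtree of [v]
   (occupying the numbers [pre v, pre v + sz v)) and [par] the parent map. *)
Record dfs_forest (U P : {set V}) (pre sz : V -> nat) (par : V -> option V)
    : Prop := DfsForest {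
  dfs_size : forall v, v \in U -> 0 < sz v /\ pre v + sz v <= #|U|;
  dfs_pre_inj : {in U &, injective pre};
  dfs_laminar : forall v w, v \in U -> w \in U -> below pre sz v w ->
    pre v + sz v <= pre w + sz w;
  dfs_parent : forall v u, v \in U -> par v = Some u ->
    [/\ u \in U, g u v, below pre sz v u & u != v];
  dfs_parent_below : forall v w, v \in U -> w \in U -> below pre sz v w ->
    v != w -> exists2 u, par v = Some u & below pre sz u w;
  dfs_root : forall v, v \in U -> par v = None -> v \in P;
  dfs_arc : forall y z, y \in U -> z \in U -> g y z ->
    below pre sz z y \/ pre z < pre y }.

Lemma dfs_forest0 P : dfs_forest set0 P (fun=> 0) (fun=> 1) (fun=> None).
Proof. by split=> v; rewrite ?inE // => w; rewrite inE. Qed.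

Section Plant.
Variables (c : V) (S P : {set V}) (pre sz : V -> nat) (par : V -> option V).
Hypotheses (HS : dfs_forest S [set u | g c u] pre sz par)
  (cS : c \notin S) (cP : c \in P).

Definition plant_pre v := if v == c then 0 else (pre v).+1.
Definition plant_sz v := if v == c then #|S|.+1 else sz v.
Definition plant_par v := if v == c then None else Some (odflt c (par v)).

Variant plant_spec v : nat -> nat -> option V -> Prop :=
| PlantRoot of v = c : plant_spec v 0 #|S|.+1 None
| PlantSub of v \in S & 0 < sz v & pre v + sz v <= #|S| :
    plant_spec v (pre v).+1 (sz v) (Some (odflt c (par v))).

Lemma plantP v : v \in c |: S -> plant_spec v (plant_pre v) (plant_sz v) (plant_par v).
Proof.
rewrite /plant_pre /plant_sz /plant_par in_setU1.
case: eqP => [->|_] /= vS; first exact: PlantRoot.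
by have [] := dfs_size HS vS; constructor.
Qed.

Lemma plant_sub v : v \in S -> plant_pre v = (pre v).+1 /\ plant_sz v = sz v.
Proof.
move=> vS; have vc : v != c by apply: contraNneq cS => <-.
by rewrite /plant_pre /plant_sz (negbTE vc).
Qed.

Lemma dfs_plant : dfs_forest (c |: S) P plant_pre plant_sz plant_par.
Proof.
have cardcS : #|c |: S| = #|S|.+1 by rewrite cardsU1 cS.
split.
- by move=> v /plantP[] *; rewrite cardcS; lia.
- move=> v w /plantP[->|vS ? ?] /plantP[->|wS ? ?] //; try lia.
  by move=> [/(dfs_pre_inj HS vS wS)].
- move=> v w vU wU; rewrite /below.
  case: (plantP vU) => [?|vS ? ?]; case: (plantP wU) => [?|wS ? ?]; try lia.
  by have := dfs_laminar HS vS wS; rewrite /below; lia.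
- move=> v u vU; rewrite /below; case: (plantP vU) => [//|vS ? ?] [<-].
  case Epar: (par v) => [p|] /=.
    have [pS gpv vp pv] := dfs_parent HS vS Epar.
    have [-> ->] := plant_sub pS.
    by split; [rewrite in_setU1 pS orbT | | move: vp; rewrite /below; lia |].
  have := dfs_root HS vS Epar; rewrite inE => gcv.
  rewrite /plant_pre /plant_sz eqxx; split; [exact: setU11 | done | lia |].
  by apply: contraNneq cS => ->.
- move=> v w vU wU; rewrite /below.
  case: (plantP vU) => [->|vS ? ?]; case: (plantP wU) => [->|wS ? ?]; try lia.
  + by rewrite eqxx.
  + move=> _ _; exists (odflt c (par v)) => //.
    have uU : odflt c (par v) \in c |: S.
      case Epar: (par v) => [u|] /=; last exact: setU11.
      by have [uS _ _ _] := dfs_parent HS vS Epar; rewrite in_setU1 uS orbT.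
    by rewrite /below; case: (plantP uU) => [|uS ? ?]; rewrite ?eqxx; lia.
  + move=> Hvw vw; have [|u Epar [? ?]] := dfs_parent_below HS vS wS _ vw.
      by rewrite /below; lia.
    have [uS _ _ _] := dfs_parent HS vS Epar.
    by exists u; rewrite ?Epar // /below; have [-> _] := plant_sub uS; lia.
- by move=> v /plantP[->|].
- move=> y z yU zU gyz; rewrite /below.
  case: (plantP yU) => [_|yS ? ?]; case: (plantP zU) => [_|zS ? ?]; try lia.
  by have := dfs_arc HS yS zS gyz; rewrite /below; lia.
Qed.
End Plant.

Section Concat.
Variables (A B P : {set V}) (pre1 sz1 pre2 sz2 : V -> nat) (par1 par2 : V -> option V).
Hypotheses (HA : dfs_forest A P pre1 sz1 par1) (HB : dfs_forest B P pre2 sz2 par2)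
  (disjAB : [disjoint A & B]) (noarcAB : forall y z, y \in A -> z \in B -> ~~ g y z).

Definition cat_pre v := if v \in A then pre1 v else #|A| + pre2 v.
Definition cat_sz v := if v \in A then sz1 v else sz2 v.
Definition cat_par v := if v \in A then par1 v else par2 v.

Variant cat_spec v : nat -> nat -> option V -> Prop :=
| CatL of v \in A & 0 < sz1 v & pre1 v + sz1 v <= #|A| :
    cat_spec v (pre1 v) (sz1 v) (par1 v)
| CatR of v \in B & 0 < sz2 v & pre2 v + sz2 v <= #|B| :
    cat_spec v (#|A| + pre2 v) (sz2 v) (par2 v).

Lemma catP v : v \in A :|: B -> cat_spec v (cat_pre v) (cat_sz v) (cat_par v).
Proof.
rewrite /cat_pre /cat_sz /cat_par in_setU.
case vA: (v \in A) => /= vB; first by have [] := dfs_size HA vA; constructor.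
by have [] := dfs_size HB vB; constructor.
Qed.

Lemma catL v : v \in A -> cat_pre v = pre1 v /\ cat_sz v = sz1 v.
Proof. by rewrite /cat_pre /cat_sz => ->. Qed.

Lemma catR v : v \in B -> cat_pre v = #|A| + pre2 v /\ cat_sz v = sz2 v.
Proof. by rewrite /cat_pre /cat_sz => vB; rewrite (disjointFl disjAB vB). Qed.

Lemma dfs_cat : dfs_forest (A :|: B) P cat_pre cat_sz cat_par.
Proof.
have cardAB : #|A :|: B| = #|A| + #|B|.
  by rewrite cardsU (disjoint_setI0 disjAB) cards0 subn0.
split.
- by move=> v /catP[] *; rewrite cardAB; lia.
- move=> v w vU wU; case: (catP vU) => vX ? ?; case: (catP wU) => wX ? ? E; try lia.
  + exact: (dfs_pre_inj HA vX wX).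
  + by apply: (dfs_pre_inj HB vX wX); lia.
- move=> v w vU wU; rewrite /below.
  case: (catP vU) => vX ? ?; case: (catP wU) => wX ? ?; try lia.
  + by have := dfs_laminar HA vX wX; rewrite /below; lia.
  + by have := dfs_laminar HB vX wX; rewrite /below; lia.
- move=> v u vU; rewrite /below; case: (catP vU) => vX ? ? Epar.
  + have [uA guv vu uv] := dfs_parent HA vX Epar.
    have [-> ->] := catL uA; move: vu; rewrite /below in_setU uA.
    by split=> //; lia.
  + have [uB guv vu uv] := dfs_parent HB vX Epar.
    have [-> ->] := catR uB; move: vu; rewrite /below in_setU uB orbT.
    by split=> //; lia.
- move=> v w vU wU; rewrite /below.
  case: (catP vU) => vX ? ?; case: (catP wU) => wX ? ? Hvw vw; try lia.
  + have [|u Epar Huw] := dfs_parent_below HA vX wX _ vw; first by [].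
    have [uA _ _ _] := dfs_parent HA vX Epar.
    by exists u; rewrite // (catL uA).1.
  + have [|u Epar Huw] := dfs_parent_below HB vX wX _ vw; first by rewrite /below; lia.
    have [uB _ _ _] := dfs_parent HB vX Epar.
    by exists u; rewrite // (catR uB).1; move: Huw; rewrite /below; lia.
- move=> v vU; case: (catP vU) => vX _ _; [exact (dfs_root HA vX) | exact (dfs_root HB vX)].
- move=> y z yU zU gyz; rewrite /below.
  case: (catP yU) => yX ? ?; case: (catP zU) => zX ? ?; try lia.
  + by have := dfs_arc HA yX zX gyz; rewrite /below.
  + by have := noarcAB yX zX; rewrite gyz.
  + by have := dfs_arc HB yX zX gyz; rewrite /below; lia.
Qed.
End Concat.

Definition gsub (U : {set V}) : rel V := fun x y => [&& g x y, x \in U & y \in U].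

Definition rooted_in (U P : {set V}) : Prop :=
  forall u, u \in U -> exists2 p, p \in P :&: U & connect (gsub U) p u.

Lemma path_gsub_restrict (U S : {set V}) x s :
  path (gsub U) x s -> all (mem S) (x :: s) -> path (gsub S) x s.
Proof.
elim: s x => [|y s IHs] x //= /andP[/and3P[gxy _ _] Hp] /and3P[xS yS Hs].
by rewrite /gsub gxy xS yS /=; apply: IHs; rewrite //= yS.
Qed.

Lemma connect_gsub_closed (U : {set V}) x y :
  x \in U -> connect (gsub U) x y -> y \in U.
Proof.
move=> xU /connectP[p Hp ->]; case/lastP: p Hp => [|p z] //.
by rewrite rcons_path last_rcons => /andP[_ /and3P[]].
Qed.

Lemma connect_to_last (e : rel V) x s y :
  path e x s -> y \in x :: s -> connect e y (last x s).
Proof.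
elim: s x y => [|z s IHs] x y /=; first by move=> _; rewrite inE => /eqP->.
move=> /andP[exz Hp]; rewrite inE => /orP[/eqP->|]; last exact: IHs Hp.
by apply: connect_trans (connect1 exz) (IHs _ _ Hp _); rewrite inE eqxx.
Qed.

Section Reach.
Variables (U : {set V}) (c : V).
Let R := [set u | connect (gsub U) c u].

Lemma rooted_reach_successors : rooted_in (R :\ c) [set u | g c u].
Proof.
move=> u; rewrite in_setD1 inE => /andP[uc /connectP[q Hq Eu]].
move: uc; rewrite {}Eu; case/shortenP: Hq => [[|p q'] Hpath Hun _] /=.
  by rewrite eqxx.
move=> _; move: (Hpath) => /= /andP[cp Hp]; move: (cp) => /and3P[gcp _ _].
move: Hun => /= /andP[cpq _].
have Hall : all (mem (R :\ c)) (p :: q').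
  apply/allP => y Hy /=; rewrite in_setD1 inE (path_connect Hpath); last first.
    by rewrite inE Hy orbT.
  by rewrite andbT; apply: contraNneq cpq => <-.
exists p; first by move: Hall => /andP[pRc _]; rewrite in_setI inE gcp.
by apply/connectP; exists q' => //; apply: path_gsub_restrict Hp Hall.
Qed.

Lemma rooted_reach_compl P : rooted_in U P -> rooted_in (U :\: R) P.
Proof.
move=> HU u; rewrite in_setD => /andP[uR uU].
have [p /setIP[pP pU] /connectP[q Hq Eu]] := HU u uU.
have Hall : all (mem (U :\: R)) (p :: q).
  apply/allP => y Hy /=; rewrite in_setD (connect_gsub_closed pU) ?andbT.
    apply: contra uR; rewrite !inE Eu => /connect_trans; apply.
    exact: connect_to_last Hq Hy.
  exact (path_connect Hq Hy).
exists p; first by move: Hall => /andP[pUR _]; rewrite in_setI pP.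
by apply/connectP; exists q => //; apply: path_gsub_restrict Hq Hall.
Qed.
End Reach.

(* The DFS from a root [c]: the vertices reachable from [c] form one tree, built
   recursively from the forest on them minus [c], rooted at out-neighbours of
   [c]; the remaining vertices follow, and no arc leads from the tree to them. *)
Lemma dfs_forest_exists U P :
  rooted_in U P -> exists pre sz par, dfs_forest U P pre sz par.
Proof.
move: {2}#|U| (leqnn #|U|) => n; elim: n U P => [|n IHn] U P cardU HU.
  move: cardU; rewrite leqn0 cards_eq0 => /eqP->.
  by exists (fun=> 0), (fun=> 1), (fun=> None); apply: dfs_forest0.
have [U0|[u0 u0U]] := set_0Vmem U.
  by rewrite U0; exists (fun=> 0), (fun=> 1), (fun=> None); apply: dfs_forest0.
have [c /setIP[cP cU] _] := HU u0 u0U.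
pose R := [set u | connect (gsub U) c u].
have cR : c \in R by rewrite inE connect0.
have RU : U :&: R = R.
  by apply/setIidPr/subsetP => u; rewrite inE; apply: connect_gsub_closed cU.
have cardR : #|R| = #|R :\ c|.+1 by rewrite (cardsD1 c R) cR.
have := cardsID R U; rewrite RU => cardUR.
have [pre1 [sz1 [par1 HRc]]] := IHn (R :\ c) [set u | g c u] ltac:(lia)
  (@rooted_reach_successors U c).
have [pre2 [sz2 [par2 HUR]]] := IHn (U :\: R) P ltac:(lia) (rooted_reach_compl HU).
have HR := dfs_plant HRc (negbT (setD11 c R)) cP; rewrite setD1K // in HR.
have disjR : [disjoint R & U :\: R].
  by rewrite disjoints_subset; apply/subsetP => u uR; rewrite in_setC in_setD uR.
have noarc y z : y \in R -> z \in U :\: R -> ~~ g y z.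
  rewrite in_setD inE => yR /andP[zR zU]; apply: contra zR => gyz.
  rewrite inE (connect_trans yR) // connect1 // /gsub gyz zU andbT.
  exact: connect_gsub_closed cU yR.
have := dfs_cat HR HUR disjR noarc.
have -> : R :|: U :\: R = U.
  apply/setP => u; rewrite !inE; case: (boolP (connect _ c u)) => //= cu.
  by rewrite (connect_gsub_closed cU cu).
by move=> HUf; do 3 eexists; exact: HUf.
Qed.
End DepthFirstForest.

Lemma size_cycle_le_circ (V : finType) (g : rel V) (c : seq V) :
  uniq c -> cycle g c -> size c <= circ g.
Proof.
move=> Hu Hc; have Hs : size c < #|V|.+1 by rewrite ltnS -(card_uniqP Hu) max_card.
rewrite /circ; apply: leq_trans (leq_maxr 1 _).
apply: (@leq_bigmax_cond _ _ (fun n : 'I_#|V|.+1 => val n) (Ordinal Hs)).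
by apply/existsP; exists (in_tuple c); rewrite /= Hu Hc.
Qed.

Lemma split_first_exit (T : eqType) (a : pred T) x q :
  a x -> has (predC a) (x :: q) ->
  exists p1 y z p2, [/\ x :: q = p1 ++ y :: z :: p2, a y & ~~ a z].
Proof.
elim: q x => [|z q IHq] x ax /=; first by rewrite ax.
rewrite ax /=; case az: (a z) => /= Hq.
  have [|p1 [y [z' [p2 [-> ay az']]]]] := IHq z az; first by rewrite /= az.
  by exists (x :: p1), y, z', p2.
by exists [::], x, z, q; rewrite az.
Qed.

Lemma path_suffix (T : eqType) (e : rel T) x q p1 y s :
  path e x q -> x :: q = p1 ++ y :: s -> path e y s.
Proof.
case: p1 => [|b p1] /= Hp [Ex Eq]; first by rewrite -Ex -Eq.
by move: Hp; rewrite Eq cat_path => /andP[_ /= /andP[]].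
Qed.

Lemma mem_take_cons (T : eqType) n (x y : T) s :
  x \in take n (y :: s) -> x \in y :: take n s.
Proof.
case: n => [|n] //=; rewrite !inE => /orP[->//|Hx]; apply/orP; right.
by rewrite -(take_takel s (leqnSn n)) in Hx; apply: mem_take Hx.
Qed.

Section DfsTree.
Variables (V : finType) (g : rel V) (pre sz : V -> nat) (par : V -> option V).
Hypothesis Hdfs : dfs_forest g [set: V] [set: V] pre sz par.
Local Notation below := (below pre sz).

Lemma sz_gt0 v : 0 < sz v.
Proof. by have [] := dfs_size Hdfs (in_setT v). Qed.

Lemma pre_lt_card v : pre v < #|V|.
Proof. by have [] := dfs_size Hdfs (in_setT v); rewrite cardsT; lia. Qed.

Lemma pre_inj : injective pre.
Proof. by move=> v w; apply: (dfs_pre_inj Hdfs); rewrite in_setT. Qed.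

Lemma below_refl v : below v v.
Proof. by rewrite /below; have := sz_gt0 v; lia. Qed.

Lemma below_trans x y z : below x y -> below y z -> below x z.
Proof.
move=> Hxy Hyz; have := dfs_laminar Hdfs (in_setT y) (in_setT z) Hyz.
by move: Hxy Hyz; rewrite /below; lia.
Qed.

Lemma below_anti x y : below x y -> below y x -> x = y.
Proof. by rewrite /below => ? ?; apply: pre_inj; lia. Qed.

Lemma parP v u : par v = Some u -> [/\ g u v, below v u & u != v].
Proof. by move=> E; have [] := dfs_parent Hdfs (in_setT v) E. Qed.

Lemma pre_par v u : par v = Some u -> pre u < pre v.
Proof.
move=> /parP[_ [? ?] uv]; suff : pre u != pre v by lia.
by apply: contra uv => /eqP /pre_inj ->.
Qed.

Lemma below_par v w : below v w -> v != w -> exists2 u, par v = Some u & below u w.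
Proof. exact: (dfs_parent_below Hdfs (in_setT v) (in_setT w)). Qed.

Lemma arc_below_or_pre y z : g y z -> below z y \/ pre z < pre y.
Proof. exact: (dfs_arc Hdfs (in_setT y) (in_setT z)). Qed.

Lemma pre_ind (P : V -> Prop) :
  (forall v, (forall u, pre u < pre v -> P u) -> P v) -> forall v, P v.
Proof.
move=> IH v; move: {2}(pre v) (leqnn (pre v)) => n; elim: n v => [|n IHn] v Hv.
  by apply: IH => u; lia.
by apply: IH => u Hu; apply: IHn; lia.
Qed.

(* [#|V|] is enough fuel, since [pre] strictly decreases along [par]. *)
Fixpoint ancestors_upto n v : seq V :=
  if n is n'.+1 then if par v is Some u then u :: ancestors_upto n' u else [::]
  else [::].

Definition anc v := ancestors_upto #|V| v.

Lemma ancestors_upto_stable n m v :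
  pre v < n -> pre v < m -> ancestors_upto n v = ancestors_upto m v.
Proof.
elim: n m v => [|n IHn] [|m] v //= Hn Hm.
case E: (par v) => [u|] //; have := pre_par E => ?.
by congr (_ :: _); apply: IHn; lia.
Qed.

Lemma anc_par v u : par v = Some u -> anc v = u :: anc u.
Proof.
move=> E; have := pre_par E; have := pre_lt_card v; rewrite /anc.
case: #|V| => [|N] // ? ?; rewrite [ancestors_upto N.+1 v]/= E; congr (_ :: _).
by apply: ancestors_upto_stable; lia.
Qed.

Lemma anc_root v : par v = None -> anc v = [::].
Proof. by move=> E; have := pre_lt_card v; rewrite /anc; case: #|V| => //= N _; rewrite E. Qed.

Lemma pre_anc v x : x \in anc v -> pre x < pre v.
Proof.
elim/pre_ind: v => v IH; case E: (par v) => [u|]; last by rewrite anc_root.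
rewrite (anc_par E) inE => /orP[/eqP->|]; first exact: pre_par E.
by move/IH; have := pre_par E; lia.
Qed.

Lemma uniq_anc v : uniq (v :: anc v).
Proof.
elim/pre_ind: v => v IH; case E: (par v) => [u|]; last by rewrite anc_root.
rewrite (anc_par E) cons_uniq IH ?andbT ?(pre_par E) // inE negb_or.
have [_ _ uv] := parP E; rewrite eq_sym uv /=.
by apply/negP => /pre_anc; have := pre_par E; lia.
Qed.

Lemma path_par_anc v : path (fun a b => par a == Some b) v (anc v).
Proof.
elim/pre_ind: v => v IH; case E: (par v) => [u|]; last by rewrite anc_root.
by rewrite (anc_par E) /= E eqxx /= IH // (pre_par E).
Qed.

Lemma below_anc_cat y w : below y w ->
  exists2 s, y :: anc y = s ++ w :: anc w & forall b, b \in s -> below b w.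
Proof.
elim/pre_ind: y => y IH Hyw; have [->|yw] := eqVneq y w; first by exists [::].
have [u E Huw] := below_par Hyw yw; have [s Es Hs] := IH u (pre_par E) Huw.
exists (y :: s); first by rewrite (anc_par E) Es.
by move=> b; rewrite inE => /orP[/eqP->|/Hs].
Qed.

Lemma mem_anc v a : a \in anc v <-> below v a /\ a != v.
Proof.
split=> [Ha|[Hva av]].
  split; last by apply: contraTneq Ha => ->; apply/negP => /pre_anc; lia.
  elim/pre_ind: v Ha => v IH; case E: (par v) => [u|]; last by rewrite anc_root.
  have [_ Hvu _] := parP E; rewrite (anc_par E) inE => /orP[/eqP-> //|].
  by move/(IH u (pre_par E)); apply: below_trans.
have [[|b s] /= [Ev Es] _] := below_anc_cat Hva; first by rewrite Ev eqxx in av.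
by rewrite Es mem_cat inE eqxx orbT.
Qed.

Definition subtree v := [set x | pre v <= pre x < pre v + sz v].

Lemma subtreeP x v : reflect (below x v) (x \in subtree v).
Proof. by rewrite inE; apply: (iffP andP). Qed.

Lemma pre_arc_outside v w w' :
  pre w < pre v -> w \notin anc v -> g w w' -> pre w' < pre v.
Proof.
move=> Hw wv /arc_below_or_pre[|]; last lia.
have nHvw : ~ below v w.
  move=> Hvw; move/negP: wv; apply; apply/mem_anc; split=> //.
  by apply: contraTneq Hw => ->; lia.
by move: nHvw; rewrite /below; lia.
Qed.

Lemma return_meets_anc v z p :
  path g z p -> pre z < pre v -> last z p \in subtree v ->
  exists seg a rest, [/\ z :: p = seg ++ a :: rest, a \in anc v &
    forall w, w \in seg -> pre w < pre v /\ w \notin anc v].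
Proof.
elim: p z => [|z' p IHp] z Hp Hz Hl; case za: (z \in anc v).
- by exists [::], z, [::].
- by move: Hl => /subtreeP; rewrite /below /=; lia.
- by exists [::], z, (z' :: p).
move: Hp => /= /andP[gzz' Hp].
have [seg [a [rest [-> Ha Hseg]]]] := IHp z' Hp (pre_arc_outside Hz (negbT za) gzz') Hl.
exists (z :: seg), a, rest; split=> // w; rewrite inE => /orP[/eqP->|/Hseg //].
by rewrite za.
Qed.

Lemma index_anc_below y v a : below y v -> a \in anc v ->
  a \in anc y /\ index a (anc v) <= index a (anc y).
Proof.
move=> Hyv Ha; have [Hva av] := (mem_anc v a).1 Ha.
have [s Es Hs] := below_anc_cat Hyv.
have aS : a \notin s by apply/negP => /Hs Hav; rewrite (below_anti Hav Hva) eqxx in av.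
have ay : a != y.
  by apply: contraTneq Ha => ->; apply/negP => /pre_anc; move: Hyv; rewrite /below; lia.
have aYanc : a \in y :: anc y by rewrite Es mem_cat inE Ha !orbT.
split; first by move: aYanc; rewrite inE (negbTE ay).
have : index a (y :: anc y) = index a (s ++ v :: anc v) by rewrite Es.
rewrite index_cat (negbTE aS) /= !(eq_sym _ a) (negbTE av) (negbTE ay).
lia.
Qed.

Lemma tree_path_to_anc y a : a \in anc y ->
  exists T, [/\ path g a (rev (y :: T)), uniq (a :: y :: T),
    size T = index a (anc y) & {subset T <= anc y}].
Proof.
move=> Ha; pose T := take (index a (anc y)) (anc y).
have Eanc : anc y = T ++ a :: drop (index a (anc y)).+1 (anc y).
  by rewrite -{1}(nth_index a Ha) -drop_nth ?index_mem // cat_take_drop.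
exists T; split.
- have := path_par_anc y; rewrite Eanc -cat_rcons cat_path => /andP[Hp _].
  suff : path (fun b c => par c == Some b) a (rev (y :: T)).
    by apply: sub_path => b c /eqP/parP[].
  by have := rev_path (fun b c => par c == Some b) y (rcons T a);
    rewrite last_rcons belast_rcons => ->.
- have := uniq_anc y; rewrite Eanc -cat_cons cat_uniq => /and3P[HyT HaT _].
  by rewrite cons_uniq HyT andbT; move: HaT => /= /norP[].
- by rewrite size_takel // ltnW // index_mem.
- exact: mem_take.
Qed.

(* The tree path from [a] down to [y] followed by [y :: seg] closes a cycle
   longer than [circ g]. *)
Lemma no_return_past_anc v y a seg :
  below y v -> a \in anc v -> circ g <= index a (anc v) ->
  path g y (rcons seg a) -> uniq (y :: seg) ->
  (forall w, w \in seg -> pre w < pre v /\ w \notin anc v) -> False.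
Proof.
move=> Hyv Ha Hidx Hpath Huniq Hseg.
have [aY leidx] := index_anc_below Hyv Ha.
have [T [HT HuT sizeT subT]] := tree_path_to_anc aY.
have [s Es Hs] := below_anc_cat Hyv.
have segT w : w \in seg -> w \notin y :: T.
  move=> /Hseg[Hwv Hwa]; apply/negP; rewrite inE => /orP[/eqP Ewy|/subT Hw].
    by move: Hyv Hwv; rewrite Ewy /below; lia.
  have : w \in s ++ v :: anc v by rewrite -Es inE Hw orbT.
  rewrite mem_cat inE (negbTE Hwa) orbF => /orP[/Hs|/eqP Ewv].
    by rewrite /below; lia.
  by move: Hwv; rewrite Ewv; lia.
have Hcycle : cycle g (a :: rev (y :: T) ++ seg).
  by rewrite /= rcons_cat cat_path HT rev_cons last_rcons.
have Hucycle : uniq (a :: rev (y :: T) ++ seg).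
  move: HuT; rewrite cons_uniq => /andP[aT uT].
  rewrite cons_uniq mem_cat mem_rev negb_or aT cat_uniq rev_uniq uT /=.
  apply/and3P; split.
  - by apply/negP => /Hseg[_]; rewrite Ha.
  - by apply/hasPn => w /segT; rewrite mem_rev.
  - by case/andP: Huniq.
have := size_cycle_le_circ Hucycle Hcycle.
by rewrite /= size_cat size_rev /= sizeT; lia.
Qed.

Definition anc_guard v := [set a in take (circ g) (anc v)].

Lemma normal_subtree v : normal g (anc_guard v) (subtree v).
Proof.
split.
  rewrite disjoints_subset; apply/subsetP => x /subtreeP Hxv; rewrite !inE.
  apply/negP => /mem_take /mem_anc[Hvx xv].
  by rewrite (below_anti Hxv Hvx) eqxx in xv.
move=> [x [q [/andP[Hp Hu] Hall Hx Hl Hout]]].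
have [p1 [y [z [p2 [Eq Hy Hz]]]]] :=
  @split_first_exit _ (fun w => w \in subtree v) x q Hx Hout.
have /= /andP[gyz Hp2] := path_suffix Hp Eq.
have Hyv : below y v by apply/subtreeP.
have Hzv : pre z < pre v.
  case: (arc_below_or_pre gyz) => [Hzy|Hzy].
    by move: Hz => /subtreeP[]; apply: below_trans Hzy Hyv.
  by move: Hz Hyv => /subtreeP; rewrite /below; lia.
have El : last x q = last z p2 by rewrite -(last_cons x x q) Eq last_cat.
rewrite El in Hl.
have [seg [a [rest [Ep2 Ha Hseg]]]] := return_meets_anc Hp2 Hzv Hl.
have Eq' : x :: q = p1 ++ y :: seg ++ a :: rest by rewrite Eq Ep2.
have aG : a \notin anc_guard v.
  by apply: (allP Hall); rewrite Eq' mem_cat inE mem_cat inE eqxx !orbT.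
apply: (@no_return_past_anc v y a seg Hyv Ha _ _ _ Hseg).
- by move: aG; rewrite inE in_take // ltnNge negbK.
- by move: (path_suffix Hp Eq'); rewrite -cat_rcons cat_path => /andP[].
- by move: Hu; rewrite Eq' cat_uniq -cat_cons cat_uniq => /and3P[_ _ /and3P[]].
Qed.

Definition dfs_tree : rel (option V) :=
  fun i j => if j is Some v then par v == i else false.

Definition tree_rank (i : option V) := if i is Some v then (pre v).+1 else 0.

Lemma tree_rank_lt i j : dfs_tree i j -> tree_rank i < tree_rank j.
Proof. by case: j => [v|] //= /eqP; case: i => [u|] // /pre_par. Qed.

Lemma dfs_tree_path_inj p1 p2 : path dfs_tree None p1 -> path dfs_tree None p2 ->
  last None p1 = last None p2 -> p1 = p2.
Proof.
elim/last_ind: p1 p2 => [|p1 i IHp] p2.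
  case/lastP: p2 => [|p2 j] // _; rewrite rcons_path last_rcons => /andP[_ +] /= Ej.
  by rewrite -Ej.
case/lastP: p2 => [|p2 j]; rewrite !rcons_path !last_rcons.
  by move=> /andP[_ +] _ /= Ei; rewrite Ei.
move=> /andP[Hp1 Hi] /andP[Hp2 Hj] Eij; subst j.
case: i Hi Hj => [w|] //= /eqP E1 /eqP E2.
by rewrite (IHp p2) // -E1 -E2.
Qed.

Lemma arborescence_dfs_tree : arborescence dfs_tree None.
Proof.
split.
- case=> [|i p] // _; apply/negP => Hc.
  have rank_trans : transitive (fun i j : option V => tree_rank i < tree_rank j).
    by move=> ? ? ?; apply: ltn_trans.
  have /allP/(_ i) := order_path_min rank_trans (sub_path tree_rank_lt Hc).
  by rewrite mem_rcons mem_head ltnn => /(_ isT).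
- case=> [v|]; split=> // Hroot; case E: (par v) => [u|].
  + by have := Hroot (Some u); rewrite /= E eqxx.
  + by have := Hroot None; rewrite /= E eqxx.
- have walk_to v : exists p, path dfs_tree None p /\ last None p = Some v.
    elim/pre_ind: v => v IH; case E: (par v) => [u|].
      have [p [Hp Hl]] := IH u (pre_par E).
      by exists (rcons p (Some v)); rewrite rcons_path last_rcons Hp Hl /= E.
    by exists [:: Some v]; rewrite /= E.
  move=> i; have [p [Hp Hl]] : exists p, path dfs_tree None p /\ last None p = i.
    by case: i => [v|]; [apply: walk_to | exists [::]].
  exists p; split=> // p' [Hp' Hl'].
  by apply: dfs_tree_path_inj; rewrite ?Hl ?Hl'.
Qed.

Lemma connect_dfs_tree v x : connect dfs_tree (Some v) (Some x) <-> below x v.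
Proof.
split.
  case/connectP => p Hp /esym; elim: p v Hp => [|[w|] p IHp] v //=.
    by move=> _ [->]; apply: below_refl.
  move=> /andP[/eqP/parP[_ Hwv _] Hp] /(IHp w Hp) Hxw.
  exact: below_trans Hxw Hwv.
elim/pre_ind: x => x IH Hxv; have [->|xv] := eqVneq x v; first exact: connect0.
have [u E Huv] := below_par Hxv xv.
by apply: connect_trans (IH u (pre_par E) Huv) (connect1 _); rewrite /= E.
Qed.

Definition dfs_bag (i : option V) : {set V} := if i is Some v then [set v] else set0.

Definition dfs_guard (i j : option V) : {set V} :=
  if j is Some v then anc_guard v else set0.

Lemma W_succ_dfs_tree v : W_succ dfs_tree dfs_bag (Some v) = subtree v.
Proof.
apply/setP => x; apply/bigcupP/subtreeP => [[[w|] Hw]|Hxv]; rewrite ?inE //.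
  by move=> /eqP ->; apply/connect_dfs_tree.
by exists (Some x); rewrite /= ?inE //; apply/connect_dfs_tree.
Qed.

Lemma arboreal_dfs_tree : arboreal_decomposition g dfs_tree None dfs_bag dfs_guard.
Proof.
split; first exact: arborescence_dfs_tree.
  split; first by move=> x; exists (Some x); rewrite /= inE.
  case=> [v|] [w|] //= vw.
  - by rewrite disjoints1 inE; apply: contra vw => /eqP ->.
  - by rewrite disjoints1 inE.
  - by rewrite disjoints_subset sub0set.
by move=> i [v|] //= _; rewrite W_succ_dfs_tree; apply: normal_subtree.
Qed.

Lemma width_dfs_tree : width dfs_tree dfs_bag dfs_guard <= circ g.
Proof.
rewrite /width -subn1 leq_subLR add1n; apply/bigmax_leqP => -[v|] _.
  apply: (@leq_trans #|[set x in v :: take (circ g) (anc v)]|).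
    apply/subset_leq_card/subsetP => x; rewrite /A_sim !inE.
    case/or3P => [-> //|/bigcupP[[c|] //= /eqP Ec]|/bigcupP[j _]]; rewrite inE.
      by rewrite (anc_par Ec); apply: mem_take_cons.
    by move=> ->; rewrite orbT.
  by rewrite cardsE (leq_trans (card_size _)) //= ltnS size_take; case: ltnP.
apply: (@leq_trans #|(set0 : {set V})|); last by rewrite cards0.
apply/subset_leq_card/subsetP => x; rewrite /A_sim !inE.
by case/or3P => [//|/bigcupP[[c|] //= /eqP Ec]|/bigcupP[[c|] //]]; rewrite inE (anc_root Ec).
Qed.

End DfsTree.

(* The construction even gives [dtw g <= circ g], and does not use looplessness. *)
Theorem mainTheorem1 (V : finType) (g : rel V) (loopless : irreflexive g) :
  dtw g <= circ g + 1.
Proof.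
have [pre [sz [par Hdfs]]] :
    exists pre sz par, dfs_forest g [set: V] [set: V] pre sz par.
  by apply: dfs_forest_exists => u _; exists u; rewrite ?inE ?connect0.
apply: leq_trans (leq_addr 1 _); rewrite /dtw; case: ex_minnP => k _ Hmin.
apply: leq_trans (Hmin _ _) (width_dfs_tree Hdfs).
rewrite /pb; case: excluded_middle_informative => // [[]].
by exists (option V : finType); do 4 eexists; split; [exact: arboreal_dfs_tree Hdfs |].
Qed.
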